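(* For any probability distributions $\mathbf{p},\mathbf{q}$ on $G_\Delta$ and any $\sigma>0$, $\mathrm{TV}(\tilde H^\sigma_{\mathbf{p}},\tilde H^\sigma_{\mathbf{q}})\le\frac{\sqrt{\mathrm{EMD}(\mathbf{p},\mathbf{q})}}{2\sigma}$.
   Context: $G_\Delta=\{(i/\Delta,j/\Delta):i,j\in\{0,\dots,\Delta-1\}\}$, $\tilde G_\Delta=\{(i/\Delta,j/\Delta):i,j\in\mathbb{Z}\}$. $\tilde H^\sigma_{\mathbf{p}}(a)=\sum_{a'\in G_\Delta}\frac1Z e^{-\|a-a'\|_2^2/(2\sigma^2)}\mathbf{p}(a')$ for $a\in\tilde G_\Delta$, $Z=\sum_{d\in\tilde G_\Delta}e^{-\|d\|_2^2/(2\sigma^2)}$. $\mathrm{TV}(P,Q)=\frac12\sum_a|P(a)-Q(a)|$. $\mathrm{EMD}(\mathbf{p},\mathbf{q})=\min_\gamma\sum_{x,y}\gamma(x,y)\|x-y\|_1$ over nonnegative couplings with marginals $\mathbf{p},\mathbf{q}$. *)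

From mathcomp Require Import all_boot all_order all_algebra.
From mathcomp Require Import all_classical all_reals all_analysis.
Set Implicit Arguments. Unset Strict Implicit. Unset Printing Implicit Defensive.
Import Order.TTheory GRing.Theory Num.Theory.
Local Open Scope classical_set_scope.
Local Open Scope ring_scope.

(* Grid G_Delta indexed by ('I_D * 'I_D): (i,j) <-> (i/D, j/D).
   Infinite lattice tilde G_Delta indexed by (int * int): (i,j) <-> (i/D, j/D). *)
Definition grid (D : nat) := ('I_D * 'I_D)%type.

Section Defs.
Variable R : realType.

Definition is_distr (D : nat) (p : grid D -> R) : Prop :=
  (forall a, 0 <= p a) /\ \sum_(a : grid D) p a = 1.

Definition sqdist (D : nat) (a b : int * int) : R :=
  (((a.1 - b.1)%:~R / D%:R) ^+ 2 + ((a.2 - b.2)%:~R / D%:R) ^+ 2).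

Definition l1dist (D : nat) (a b : int * int) : R :=
  `|(a.1 - b.1)%:~R / D%:R| + `|(a.2 - b.2)%:~R / D%:R|.

Definition gridZ (D : nat) (a : grid D) : int * int :=
  ((nat_of_ord a.1)%:Z, (nat_of_ord a.2)%:Z).

Definition Znorm (D : nat) (sigma : R) : R :=
  fine (\esum_(d in [set: int * int])
          (expR (- sqdist D d (0, 0) / (2 * sigma ^+ 2)))%:E).

Definition Htilde (D : nat) (sigma : R) (p : grid D -> R) (a : int * int) : R :=
  \sum_(a' : grid D)
     (Znorm D sigma)^-1 * expR (- sqdist D a (gridZ a') / (2 * sigma ^+ 2)) * p a'.

Definition TV (P Q : int * int -> R) : \bar R :=
  (2^-1)%:E * \esum_(a in [set: int * int]) (`|P a - Q a|)%:E.

Definition is_coupling (D : nat) (p q : grid D -> R) (g : grid D * grid D -> R) :=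
  (forall xy, 0 <= g xy) /\
  (forall x, \sum_(y : grid D) g (x, y) = p x) /\
  (forall y, \sum_(x : grid D) g (x, y) = q y).

(* EMD = min over couplings (the minimum is attained; we use the infimum) *)
Definition EMD (D : nat) (p q : grid D -> R) : R :=
  inf [set c : R | exists g, is_coupling p q g /\
        c = \sum_(xy : grid D * grid D) g xy * l1dist D (gridZ xy.1) (gridZ xy.2)].

End Defs.

From mathcomp Require Import all_boot all_order all_algebra.
From mathcomp Require Import all_classical all_reals all_analysis.
From mathcomp Require Import lra ring.
Set Implicit Arguments.
Unset Strict Implicit.
Unset Printing Implicit Defensive.
Import Order.TTheory GRing.Theory Num.Theory.
Import numFieldNormedType.Exports.
Local Open Scope classical_set_scope.
Local Open Scope ring_scope.

(* For lattice Gaussians g_x, g_y centred at x, y, the reflection a |-> 2x - a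
   of Z^2 fixes g_x and shows that KL(g_x || g_y) = |x - y|^2 / (2 sigma^2)
   exactly as for continuous Gaussians, so Pinsker's inequality gives
   sum_a |g_x a - g_y a| <= |x - y| / sigma.  For any coupling gamma of p and q,
   H_p - H_q is the gamma-average of g_x - g_y; the triangle inequality and
   Jensen's inequality for the square root bound 2 TV by
   sqrt (E_gamma |x - y|^2) / sigma, and |x - y|^2 <= |x - y|_1 on the unit
   grid.  Taking the infimum over gamma yields the EMD. *)

Section KLTerm.
Variable R : realType.
Implicit Types x t l : R.

Lemma MVT_origin (f df : R -> R) : (forall x, is_derive x 1 f (df x)) ->
  forall t, exists c, 0 <= c * t /\ f t - f 0 = df c * t.
Proof.
move=> fdf t.
have fcont a b : {within `[a, b], continuous f}.
  by apply: derivable_within_continuous => x _; case: (fdf x).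
case: (leP 0 t) => [t_ge0|t_lt0].
  have [c /andP[c_ge0 _] ->] := MVT_segment t_ge0 (fun x _ => fdf x) (fcont 0 t).
  by exists c; rewrite subr0 mulr_ge0.
have [c /andP[_ c_le0] e] := MVT_segment (ltW t_lt0) (fun x _ => fdf x) (fcont t 0).
exists c; rewrite mulr_le0 ?(ltW t_lt0) //.
by rewrite -opprB e sub0r mulrN opprK.
Qed.

(* [q * kl_term t] is the Kullback-Leibler integrand [p ln (p / q) - p + q]
   at [p = q e^t]. *)
Definition kl_term t := t * expR t - expR t + 1.

Lemma kl_term_derive x : is_derive x 1 kl_term (x * expR x).
Proof. by apply: is_derive_eq; rewrite /GRing.scale /=; ring. Qed.

Lemma kl_term_ge0 t : 0 <= kl_term t.
Proof.
have [c [ct e]] := MVT_origin kl_term_derive t.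
have -> : kl_term t = c * expR c * t by rewrite -e /kl_term expR0; ring.
by rewrite mulrAC mulr_ge0 ?expR_ge0.
Qed.

(* [pinsker_G t >= 0] is the classical inequality
   [3 (u - 1)^2 <= (2 u + 4) (u ln u - u + 1)] at [u = e^t]; it follows from
   [pinsker_G' = 4 e^t pinsker_K] and [pinsker_K' = kl_term] by two more
   mean value arguments. *)
Let pinsker_K t := (expR t + 1) * t - 2 * (expR t - 1).
Let pinsker_G t := 2 * (expR t + 2) * kl_term t - 3 * (expR t - 1) ^+ 2.

Let pinsker_K_derive x : is_derive x 1 pinsker_K (kl_term x).
Proof. by apply: is_derive_eq; rewrite /GRing.scale /= /kl_term; ring. Qed.

Let pinsker_G_derive x : is_derive x 1 pinsker_G (4 * expR x * pinsker_K x).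
Proof. by apply: is_derive_eq; rewrite /GRing.scale /= /kl_term /pinsker_K; ring. Qed.

Let pinsker_K_mul_ge0 t : 0 <= pinsker_K t * t.
Proof.
have [c [ct e]] := MVT_origin pinsker_K_derive t.
have -> : pinsker_K t = kl_term c * t by rewrite -e /pinsker_K expR0; ring.
by rewrite -mulrA mulr_ge0 ?kl_term_ge0 // -expr2 sqr_ge0.
Qed.

Lemma pinsker_sqr_le t : 3 * (expR t - 1) ^+ 2 <= 2 * (expR t + 2) * kl_term t.
Proof.
rewrite -subr_ge0 -/(pinsker_G t).
have [c [ct e]] := MVT_origin pinsker_G_derive t.
have -> : pinsker_G t = 4 * expR c * (pinsker_K c * t).
  by rewrite mulrA -e /pinsker_G /kl_term expR0; ring.
apply: mulr_ge0; first by rewrite mulr_ge0 ?expR_ge0.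
have [->|c_neq0] := eqVneq c 0; first by rewrite /pinsker_K expR0; lra.
have c2_gt0 : 0 < c * c by rewrite -expr2 exprn_even_gt0 //= c_neq0.
rewrite -(pmulr_lge0 _ c2_gt0).
have -> : pinsker_K c * t * (c * c) = (pinsker_K c * c) * (c * t) by ring.
exact: mulr_ge0 (pinsker_K_mul_ge0 c) ct.
Qed.

Lemma pinsker_pointwise t l : 0 < l ->
  `|expR t - 1| <= l * ((expR t + 2) / 3) + kl_term t / (2 * l).
Proof.
move=> l_gt0.
set A := l * _; set B := kl_term t / _.
have A_ge0 : 0 <= A by rewrite mulr_ge0 ?divr_ge0 ?addr_ge0 ?expR_ge0 ?ltW.
have B_ge0 : 0 <= B by rewrite divr_ge0 ?kl_term_ge0 ?mulr_ge0 ?ltW.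
have sqr_le_AB : (expR t - 1) ^+ 2 <= 4 * A * B.
  have -> : 4 * A * B = 2 * (expR t + 2) * kl_term t / 3.
    by rewrite /A /B; field; rewrite gt_eqF.
  by rewrite ler_pdivlMr //; have := pinsker_sqr_le t; lra.
have AB_sqr : 4 * A * B <= (A + B) ^+ 2 by have := sqr_ge0 (A - B); lra.
by rewrite -(ger0_norm (addr_ge0 A_ge0 B_ge0)) -!sqrtr_sqr ler_wsqrtr ?(le_trans sqr_le_AB).
Qed.

End KLTerm.

Section ESum.
Variable R : realType.

Lemma esumZl (T : choiceType) (S : set T) (k : R) (f : T -> R) :
  0 <= k -> (forall i, S i -> 0 <= f i) ->
  \esum_(i in S) (k * f i)%:E = (k%:E * \esum_(i in S) (f i)%:E)%E.
Proof.
move=> k_ge0 f_ge0; rewrite /esum -ereal_supZl //; last first.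
  by apply/set0P; exists 0%E; exists set0; [exact: fsets_set0|rewrite fsbig_set0].
have sumZ X : finite_set X ->
    (\sum_(i \in X) (k * f i)%:E = k%:E * \sum_(i \in X) (f i)%:E)%E.
  by move=> X_fin; rewrite !fsbig_finite // !sumEFin -EFinM mulr_sumr.
congr ereal_sup; apply/seteqP; split=> [_ [X [X_fin XS] <-]|_ [_ [X [X_fin XS] <-] <-]].
  by exists (\sum_(i \in X) (f i)%:E)%E; [exists X|rewrite sumZ].
by exists X; rewrite ?sumZ.
Qed.

Lemma esum_translate (V : zmodType) (x : V) (f : V -> \bar R) :
  \esum_(a in [set: V]) f (a - x) = \esum_(a in [set: V]) f a.
Proof.
rewrite [RHS](reindex_esum [set: V] [set: V] (fun a => a - x)) //.
by rewrite setTT_bijective; exists (+%R^~ x) => a; rewrite ?subrK ?addrK.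
Qed.

Lemma esum_reflect (V : zmodType) (x : V) (f : V -> \bar R) :
  \esum_(a in [set: V]) f (x *+ 2 - a) = \esum_(a in [set: V]) f a.
Proof.
rewrite [RHS](reindex_esum [set: V] [set: V] (fun a => x *+ 2 - a)) //.
by rewrite setTT_bijective; exists (fun a => x *+ 2 - a) => a; rewrite subKr.
Qed.

End ESum.

Section Pinsker.
Variables (R : realType) (T : choiceType) (q t : T -> R) (k : R).
Hypothesis q_ge0 : forall a, 0 <= q a.
Hypothesis esum_q : \esum_(a in [set: T]) (q a)%:E = 1%E.
Hypothesis esum_q_expR : \esum_(a in [set: T]) (q a * expR (t a))%:E = 1%E.
Hypothesis esum_q_kl : \esum_(a in [set: T]) (q a * kl_term (t a))%:E = k%:E.

Lemma pinsker_lambda l : 0 < l ->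
  (\esum_(a in [set: T]) (`|q a * expR (t a) - q a|)%:E <= (l + k / (2 * l))%:E)%E.
Proof.
move=> l_gt0.
have c1_ge0 : 0 <= l / 3 by rewrite divr_ge0 // ltW.
have c2_ge0 : 0 <= 2 * l / 3 by rewrite divr_ge0 // mulr_ge0 // ltW.
have c3_ge0 : 0 <= (2 * l)^-1 by rewrite invr_ge0 mulr_ge0 // ltW.
have qe_ge0 a : 0 <= q a * expR (t a) by rewrite mulr_ge0 ?expR_ge0.
have qkl_ge0 a : 0 <= q a * kl_term (t a) by rewrite mulr_ge0 ?kl_term_ge0.
apply: le_trans (_ : (\esum_(a in [set: T])
   ((l / 3 * (q a * expR (t a)))%:E + (2 * l / 3 * q a)%:E
    + ((2 * l)^-1 * (q a * kl_term (t a)))%:E) <= _)%E).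
  apply: le_esum => a _; rewrite -!EFinD lee_fin.
  rewrite -{2}[q a]mulr1 -mulrBr normrM (ger0_norm (q_ge0 a)).
  have -> : l / 3 * (q a * expR (t a)) + 2 * l / 3 * q a
      + (2 * l)^-1 * (q a * kl_term (t a))
    = q a * (l * ((expR (t a) + 2) / 3) + kl_term (t a) / (2 * l)) by ring.
  by rewrite ler_wpM2l ?pinsker_pointwise.
rewrite esumD => [|a _|a _]; last 2 first.
- by rewrite adde_ge0 // lee_fin mulr_ge0.
- by rewrite lee_fin mulr_ge0.
rewrite esumD => [|a _|a _]; try by rewrite lee_fin mulr_ge0.
rewrite !esumZl // esum_q esum_q_expR esum_q_kl !mule1 -!EFinM -!EFinD lee_fin.
by rewrite mulrC; lra.
Qed.

Lemma pinsker :
  (\esum_(a in [set: T]) (`|q a * expR (t a) - q a|)%:E <= (Num.sqrt (2 * k))%:E)%E.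
Proof.
have k_ge0 : 0 <= k.
  by rewrite -lee_fin -esum_q_kl esum_ge0 // => a _; rewrite lee_fin mulr_ge0 ?kl_term_ge0.
have [k0|k_gt0] := eqVneq k 0.
  rewrite k0 mulr0 sqrtr0; apply/lee_addgt0Pr => e e_gt0.
  by rewrite add0e (le_trans (pinsker_lambda e_gt0)) // k0 mul0r addr0.
(* the bound [l + k / (2 l)] is minimal at [l = sqrt (k / 2)] *)
set s := Num.sqrt (k / 2).
have s_gt0 : 0 < s by rewrite sqrtr_gt0 divr_gt0 // lt_def k_gt0.
have k_s : k = 2 * s ^+ 2 by rewrite sqr_sqrtr ?divr_ge0 //; field.
apply: (le_trans (pinsker_lambda s_gt0)); rewrite lee_fin.
have -> : 2 * k = (2 * s) ^+ 2 by rewrite k_s; ring.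
have -> : k / (2 * s) = s by rewrite k_s; field; rewrite gt_eqF.
by rewrite sqrtr_sqr ger0_norm ?mulr_ge0 ?(ltW s_gt0) //; lra.
Qed.

End Pinsker.

Section LatticeGeometry.
Variables (R : realType) (D : nat).
Implicit Types a x y : int * int.

Lemma sqdist_ge0 x y : 0 <= sqdist R D x y.
Proof. by rewrite addr_ge0 ?sqr_ge0. Qed.

Lemma l1dist_ge0 x y : 0 <= l1dist R D x y.
Proof. by rewrite addr_ge0. Qed.

Lemma sqdistxx x : sqdist R D x x = 0.
Proof. by rewrite /sqdist !subrr mul0r expr0n addr0. Qed.

Lemma sqdist_translate a x : sqdist R D a x = sqdist R D (a - x) (0, 0).
Proof. by rewrite /sqdist /= !subr0. Qed.

Lemma sqdist_reflect a x : sqdist R D (x *+ 2 - a) x = sqdist R D a x.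
Proof. by rewrite /sqdist /= !rmorphB /= !rmorphMn /=; ring. Qed.

Lemma sqdist_parallelogram a x y :
  sqdist R D a y + sqdist R D (x *+ 2 - a) y = 2 * sqdist R D a x + 2 * sqdist R D x y.
Proof. by rewrite /sqdist /= !rmorphB /= !rmorphMn /=; ring. Qed.

End LatticeGeometry.

Section GaussKernel.
Variables (R : realType) (D : nat) (sigma : R).
Hypothesis sigma_gt0 : 0 < sigma.
Hypothesis gauss_mass_fin : (\esum_(d in [set: int * int])
  (expR (- sqdist R D d (0, 0) / (2 * sigma ^+ 2)))%:E < +oo)%E.
Implicit Types a x y : int * int.

Definition gauss x a : R :=
  (Znorm D sigma)^-1 * expR (- sqdist R D a x / (2 * sigma ^+ 2)).

Definition gauss_log_ratio x y a : R :=
  (sqdist R D a y - sqdist R D a x) / (2 * sigma ^+ 2).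

Lemma Znorm_esum : \esum_(d in [set: int * int])
  (expR (- sqdist R D d (0, 0) / (2 * sigma ^+ 2)))%:E = (Znorm D sigma)%:E.
Proof.
rewrite fineK // ge0_fin_numE ?gauss_mass_fin //.
by apply: esum_ge0 => d _; rewrite lee_fin expR_ge0.
Qed.

Lemma Znorm_ge1 : 1 <= Znorm D sigma.
Proof.
rewrite -lee_fin -Znorm_esum; apply: esum_ge; exists [set (0, 0)].
  by split; [exact: finite_set1|].
by rewrite fsbig_set1 sqdistxx oppr0 mul0r expR0.
Qed.

Lemma gauss_ge0 x a : 0 <= gauss x a.
Proof. by rewrite mulr_ge0 ?expR_ge0 // invr_ge0 (le_trans ler01 Znorm_ge1). Qed.

Lemma esum_gauss x : \esum_(a in [set: int * int]) (gauss x a)%:E = 1%E.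
Proof.
have Z_gt0 : 0 < Znorm D sigma := lt_le_trans ltr01 Znorm_ge1.
rewrite esumZl ?invr_ge0 ?(ltW Z_gt0) //.
under eq_esum do rewrite sqdist_translate.
rewrite (esum_translate x (fun d => (expR (- sqdist R D d (0, 0) / _))%:E)).
by rewrite Znorm_esum -EFinM mulVf ?gt_eqF.
Qed.

Lemma gauss_reflect x a : gauss x (x *+ 2 - a) = gauss x a.
Proof. by rewrite /gauss sqdist_reflect. Qed.

Lemma gaussE x y a : gauss x a = gauss y a * expR (gauss_log_ratio x y a).
Proof.
rewrite /gauss -mulrA -expRD; congr (_ * expR _).
by rewrite /gauss_log_ratio; field; rewrite gt_eqF.
Qed.

Lemma gauss_log_ratio_reflect x y a :
  gauss_log_ratio x y a + gauss_log_ratio x y (x *+ 2 - a)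
  = 2 * (sqdist R D x y / (2 * sigma ^+ 2)).
Proof.
have := sqdist_parallelogram R D a x y; rewrite /gauss_log_ratio sqdist_reflect.
by move=> par; rewrite -mulrDl mulrA; congr (_ / _); lra.
Qed.

Lemma gauss_kl_reflect x y a :
  gauss y a * kl_term (gauss_log_ratio x y a)
  + gauss y (x *+ 2 - a) * kl_term (gauss_log_ratio x y (x *+ 2 - a))
  + 2 * gauss x a
  = 2 * (sqdist R D x y / (2 * sigma ^+ 2)) * gauss x a
    + gauss y a + gauss y (x *+ 2 - a).
Proof.
have klE b : gauss y b * kl_term (gauss_log_ratio x y b)
    = gauss x b * gauss_log_ratio x y b - gauss x b + gauss y b.
  by rewrite (gaussE x y b) /kl_term; ring.
by rewrite (klE a) (klE (x *+ 2 - a)) gauss_reflect -(gauss_log_ratio_reflect x y a); ring.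
Qed.

(* Under [a |-> 2 x - a] the part of the log-ratio linear in [a - x] changes
   sign, so only its constant term survives in the Kullback-Leibler sum. *)
Lemma esum_gauss_kl x y :
  \esum_(a in [set: int * int]) (gauss y a * kl_term (gauss_log_ratio x y a))%:E
  = (sqdist R D x y / (2 * sigma ^+ 2))%:E.
Proof.
set c := sqdist R D x y / _.
pose W a := gauss y a * kl_term (gauss_log_ratio x y a).
rewrite -[LHS]/(\esum_(a in [set: int * int]) (W a)%:E).
have c_ge0 : 0 <= c by rewrite divr_ge0 ?sqdist_ge0 ?mulr_ge0 ?exprn_ge0 ?ltW.
have W_ge0 a : 0 <= W a by rewrite mulr_ge0 ?gauss_ge0 ?kl_term_ge0.
have gx_ge0 := gauss_ge0 x; have gy_ge0 := gauss_ge0 y.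
have gx2_ge0 a : 0 <= 2 * gauss x a := mulr_ge0 (ler0n _ 2) (gx_ge0 a).
have gxc_ge0 a : 0 <= 2 * c * gauss x a := mulr_ge0 (mulr_ge0 (ler0n _ 2) c_ge0) (gx_ge0 a).
have : (\esum_(a in [set: int * int])
      ((W a)%:E + (W (x *+ 2 - a))%:E + (2 * gauss x a)%:E)
    = \esum_(a in [set: int * int])
      ((2 * c * gauss x a)%:E + (gauss y a)%:E + (gauss y (x *+ 2 - a))%:E))%E.
  by apply: eq_esum => a _; rewrite -!EFinD gauss_kl_reflect.
rewrite !esumD; try by move=> a _; rewrite ?adde_ge0 // lee_fin.
rewrite (esum_reflect x (fun a => (W a)%:E)).
rewrite (esum_reflect x (fun a => (gauss y a)%:E)).
rewrite !(esumZl (f := gauss x)) //; try by rewrite mulr_ge0.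
rewrite !esum_gauss !mule1.
have : (0 <= \esum_(a in [set: int * int]) (W a)%:E)%E.
  by apply: esum_ge0 => a _; rewrite lee_fin.
set S := \esum_(a in [set: int * int]) (W a)%:E.
case: S => [r| |] //= _.
by rewrite -!EFinD => -[Wr]; congr EFin; lra.
Qed.

Lemma esum_gauss_dist x y :
  (\esum_(a in [set: int * int]) (`|gauss x a - gauss y a|)%:E
   <= (Num.sqrt (sqdist R D x y) / sigma)%:E)%E.
Proof.
under eq_esum do rewrite (gaussE x y).
have esum_expR : \esum_(a in [set: int * int])
    (gauss y a * expR (gauss_log_ratio x y a))%:E = 1%E.
  by under eq_esum do rewrite -gaussE; exact: esum_gauss.
apply: le_trans (pinsker (gauss_ge0 y) (esum_gauss y) esum_expR (esum_gauss_kl x y)) _.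
have -> : 2 * (sqdist R D x y / (2 * sigma ^+ 2)) = sqdist R D x y * sigma^-1 ^+ 2.
  by field; rewrite gt_eqF.
by rewrite sqrtrM ?sqdist_ge0 // sqrtr_sqr ger0_norm ?invr_ge0 ?(ltW sigma_gt0).
Qed.

End GaussKernel.

Section SqrtBounds.
Variable R : realType.

Lemma jensen_sqrt (I : finType) (w l : I -> R) :
  (forall i, 0 <= w i) -> \sum_i w i = 1 -> (forall i, 0 <= l i) ->
  \sum_i w i * Num.sqrt (l i) <= Num.sqrt (\sum_i w i * l i).
Proof.
move=> w_ge0 w1 l_ge0.
have wl_ge0 i : 0 <= w i * l i by rewrite mulr_ge0.
set C := \sum_i w i * l i.
have [C0|C_gt0] := eqVneq C 0.
  have wl0 := psumr_eq0P (fun i _ => wl_ge0 i) C0.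
  rewrite C0 sqrtr0 big1 // => i _.
  have /eqP := wl0 i isT.
  by rewrite mulf_eq0 => /orP[]/eqP->; rewrite ?mul0r ?sqrtr0 ?mulr0.
set m := Num.sqrt C.
have m_gt0 : 0 < m by rewrite sqrtr_gt0 lt_def C_gt0 sumr_ge0.
(* AM-GM: [sqrt l <= (l / m + m) / 2], and the right-hand side averages to [m] *)
apply: (@le_trans _ _ (\sum_i w i * ((l i / m + m) / 2))).
  apply: ler_sum => i _; rewrite ler_wpM2l // ler_pdivlMr // -(ler_pM2r m_gt0).
  rewrite mulrDl divfK ?gt_eqF // -{2}[l i]sqr_sqrtr //.
  by have := sqr_ge0 (Num.sqrt (l i) - m); lra.
have -> : \sum_i w i * ((l i / m + m) / 2) = (C / m + m) / 2.
  rewrite (eq_bigr (fun i => w i * l i * (m^-1 / 2) + w i * (m / 2))) => [|i _].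
    by rewrite big_split /= -!mulr_suml w1 -/C; field; rewrite gt_eqF.
  by field; rewrite gt_eqF.
by rewrite -[C in C / m]sqr_sqrtr ?sumr_ge0 // -/m expr2 mulfK ?gt_eqF //; lra.
Qed.

Lemma lee_sqrt_inf (S : set R) (E : \bar R) (k : R) :
  S !=set0 -> (forall c, S c -> 0 <= c) -> 0 < k ->
  (forall c, S c -> (E <= (Num.sqrt c / k)%:E)%E) ->
  (E <= (Num.sqrt (inf S) / k)%:E)%E.
Proof.
move=> [c0 Sc0] S_ge0 k_gt0 E_le.
case: E E_le (E_le _ Sc0) => [e E_le _| |_ _]; [rewrite lee_fin|by []|exact: leNye].
have [e_lt0|e_ge0] := ltP e 0.
  by rewrite (le_trans (ltW e_lt0)) ?divr_ge0 ?sqrtr_ge0 ?ltW.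
have ek_ge0 : 0 <= e * k by rewrite mulr_ge0 // ltW.
rewrite ler_pdivlMr // -(ger0_norm ek_ge0) -sqrtr_sqr ler_wsqrtr // lb_le_inf //.
  by exists c0.
move=> c Sc; have := E_le c Sc; rewrite lee_fin ler_pdivlMr // => ek_le.
by rewrite -[c]sqr_sqrtr ?S_ge0 // ler_sqr ?nnegrE ?sqrtr_ge0.
Qed.

End SqrtBounds.

Section Couplings.
Variables (R : realType) (D : nat).
Implicit Types (p q : grid D -> R) (g : grid D * grid D -> R).

Definition transport_cost g : R :=
  \sum_(xy : grid D * grid D) g xy * l1dist R D (gridZ xy.1) (gridZ xy.2).

Lemma transport_cost_ge0 g : (forall xy, 0 <= g xy) -> 0 <= transport_cost g.
Proof. by move=> g_ge0; rewrite sumr_ge0 // => xy _; rewrite mulr_ge0 ?l1dist_ge0. Qed.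

Lemma is_coupling_prod p q :
  is_distr p -> is_distr q -> is_coupling p q (fun xy => p xy.1 * q xy.2).
Proof.
move=> [p_ge0 p1] [q_ge0 q1]; split; first by move=> xy; rewrite mulr_ge0.
by split=> [x|y] /=; rewrite -?mulr_sumr -?mulr_suml ?q1 ?p1 ?mulr1 ?mul1r.
Qed.

Lemma coupling_sum1 p q g : is_coupling p q g -> \sum_x p x = 1 -> \sum_xy g xy = 1.
Proof.
move=> [_ [gp _]] <-; rewrite (eq_bigr (fun xy => g (xy.1, xy.2))) => [|[] //].
by rewrite -(pair_bigA _ (fun x y => g (x, y))); apply: eq_bigr => x _; rewrite gp.
Qed.

Lemma coupling_sumB p q g (f : grid D -> R) : is_coupling p q g ->
  \sum_x f x * p x - \sum_y f y * q y = \sum_xy g xy * (f xy.1 - f xy.2).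
Proof.
move=> [_ [gp gq]].
under eq_bigr do rewrite -gp mulr_sumr.
under [X in _ - X]eq_bigr do rewrite -gq mulr_sumr.
rewrite [X in _ - X]exchange_big !pair_bigA -sumrB.
by apply: eq_bigr => -[x y] _ /=; rewrite mulrBr ![f _ * _]mulrC.
Qed.

Lemma sqdist_le_l1dist (x y : grid D) :
  sqdist R D (gridZ x) (gridZ y) <= l1dist R D (gridZ x) (gridZ y).
Proof.
have D_gt0 : (0 < D)%N by case: x => i _; exact: leq_ltn_trans (leq0n i) (ltn_ord i).
have coord_le1 (i j : 'I_D) : `|((i : int) - (j : int))%:~R / (D%:R : R)| <= 1.
  rewrite normrM normfV (ger0_norm (ler0n R D)) ler_pdivrMr ?ltr0n // mul1r.
  rewrite rmorphB /= -!pmulrn ler_norml.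
  have := ltn_ord i; have := ltn_ord j; rewrite -!(ltr_nat R).
  by have := ler0n R i; have := ler0n R j; lra.
have sqr_le (u : R) : `|u| <= 1 -> u ^+ 2 <= `|u|.
  move=> u_le1; rewrite -[u ^+ 2]ger0_norm ?sqr_ge0 // normrX expr2.
  exact: ler_piMl (normr_ge0 u) u_le1.
by rewrite lerD ?sqr_le ?coord_le1.
Qed.

End Couplings.

Lemma TV_Htilde_Znorm_infty (R : realType) (D : nat) (sigma : R) (p q : grid D -> R) :
  \esum_(d in [set: int * int])
      (expR (- sqdist R D d (0, 0) / (2 * sigma ^+ 2)))%:E = +oo%E ->
  TV (Htilde sigma p) (Htilde sigma q) = 0%E.
Proof.
move=> infty; have Z0 : Znorm D sigma = 0 by rewrite /Znorm infty.
rewrite /TV esum1 ?mule0 // => a _.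
by rewrite /Htilde Z0 invr0 !big1 ?subrr ?normr0 // => i _; rewrite !mul0r.
Qed.

Section SmoothedTV.
Variables (R : realType) (D : nat) (sigma : R).
Hypothesis sigma_gt0 : 0 < sigma.
Hypothesis gauss_mass_fin : (\esum_(d in [set: int * int])
  (expR (- sqdist R D d (0, 0) / (2 * sigma ^+ 2)))%:E < +oo)%E.
Implicit Types (p q : grid D -> R) (g : grid D * grid D -> R).

Lemma esum_Htilde_subr_le p q g :
  is_coupling p q g ->
  (\esum_(a in [set: int * int]) (`|Htilde sigma p a - Htilde sigma q a|)%:E
   <= ((\sum_xy g xy * Num.sqrt (sqdist R D (gridZ xy.1) (gridZ xy.2))) / sigma)%:E)%E.
Proof.
move=> [g_ge0 g_marg].
have HsubE a : Htilde sigma p a - Htilde sigma q a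
    = \sum_xy g xy * (gauss D sigma (gridZ xy.1) a - gauss D sigma (gridZ xy.2) a).
  exact: (coupling_sumB (fun x => gauss D sigma (gridZ x) a) (conj g_ge0 g_marg)).
apply: (@le_trans _ _ (\esum_(a in [set: int * int]) \sum_xy
    (g xy * `|gauss D sigma (gridZ xy.1) a - gauss D sigma (gridZ xy.2) a|)%:E)).
  apply: le_esum => a _; rewrite sumEFin lee_fin HsubE.
  apply: le_trans (ler_norm_sum _ _ _) _; apply: ler_sum => xy _.
  by rewrite normrM (ger0_norm (g_ge0 xy)).
rewrite esum_sum => [|a xy _ _]; last by rewrite lee_fin mulr_ge0.
rewrite mulr_suml -sumEFin; apply: lee_sum => xy _.
rewrite esumZl // -mulrA EFinM lee_wpmul2l ?lee_fin //.
exact: esum_gauss_dist.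
Qed.

Lemma TV_Htilde_le_cost p q g :
  is_coupling p q g -> \sum_x p x = 1 ->
  (TV (Htilde sigma p) (Htilde sigma q)
   <= (Num.sqrt (transport_cost g) / (2 * sigma))%:E)%E.
Proof.
move=> gc p1; have g_ge0 := gc.1.
have sum_sqrt_le : \sum_xy g xy * Num.sqrt (sqdist R D (gridZ xy.1) (gridZ xy.2))
    <= Num.sqrt (transport_cost g).
  have l1_ge0 (xy : grid D * grid D) : 0 <= l1dist R D (gridZ xy.1) (gridZ xy.2).
    exact: l1dist_ge0.
  apply: le_trans (jensen_sqrt g_ge0 (coupling_sum1 gc p1) l1_ge0).
  by apply: ler_sum => xy _; rewrite ler_wpM2l ?ler_wsqrtr ?sqdist_le_l1dist.
have -> : Num.sqrt (transport_cost g) / (2 * sigma)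
    = 2^-1 * (Num.sqrt (transport_cost g) / sigma) by field; rewrite gt_eqF.
rewrite /TV EFinM lee_wpmul2l ?lee_fin ?invr_ge0 //.
apply: le_trans (esum_Htilde_subr_le gc) _.
by rewrite lee_fin ler_pM2r ?invr_gt0.
Qed.

End SmoothedTV.

Theorem lemma10 (R : realType) (D : nat) (p q : grid D -> R) (sigma : R) :
  is_distr p -> is_distr q -> 0 < sigma ->
  (TV (Htilde sigma p) (Htilde sigma q) <=
     (Num.sqrt (EMD p q) / (2 * sigma))%:E)%E.
Proof.
move=> p_distr q_distr sigma_gt0.
have [fin|] := ltP (\esum_(d in [set: int * int])
  (expR (- sqdist R D d (0, 0) / (2 * sigma ^+ 2)))%:E) +oo%E; last first.
  rewrite leye_eq => /eqP infty; rewrite TV_Htilde_Znorm_infty // lee_fin.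
  by rewrite divr_ge0 ?sqrtr_ge0 // mulr_ge0 // ltW.
apply: lee_sqrt_inf.
- exists (transport_cost (fun xy => p xy.1 * q xy.2)).
  by exists (fun xy => p xy.1 * q xy.2); split; first exact: is_coupling_prod.
- by move=> _ [g [[g_ge0 _] ->]]; exact: transport_cost_ge0.
- by rewrite mulr_gt0.
- by move=> _ [g [gc ->]]; apply: TV_Htilde_le_cost => //; case: p_distr.
Qed.
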